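(* In the setting of the context, suppose moreover that $B_{0,w}\le 2^{-l}\binom{n}{w}$ for all $w$ with $d_0\le w\le n$ (binomial weight distribution). Then $$P(E=0)\le 2^{-l}(1+\beta)^n,\qquad\text{equivalently}\qquad \log_2 P(E=0)\le n\bigl\{R-\bigl(1-\log_2(1+\beta)\bigr)\bigr\}\ \text{ when } l=n-k,\ R=k/n.$$
   Context: All arithmetic is over $\mathrm{GF}(2)$. $G_0$ is a fixed $n\times l$ binary matrix, $G_1$ a fixed $n\times k$ binary matrix, $\mathbf m\in\{0,1\}^k$ fixed. $\mathcal C_0^{\perp}=\{\mathbf x\in\{0,1\}^n: G_0^T\mathbf x=\mathbf 0\}$; $B_{0,w}$ is the number of vectors of Hamming weight $w$ in $\mathcal C_0^\perp$, and $d_0$ is the minimum Hamming weight of a nonzero vector of $\mathcal C_0^\perp$. Defect model: each of the $n$ memory cells is independently defective with probability $\beta\in(0,1)$; a defective cell is stuck at $0$ or at $1$, each with probability $1/2$, independently. Let $\mathcal U$ be the set of defect positions and $\mathbf s^{\mathcal U}$ the vector of stuck-at values. For a matrix $M$ (resp. vector $\mathbf v$) with rows indexed by $\{1,\dots,n\}$, $M^{\mathcal U}$ (resp. $\mathbf v^{\mathcal U}$) denotes the rows indexed by $\mathcal U$. Encoding: with $\mathbf b^{\mathcal U}=(G_1\mathbf m)^{\mathcal U}+\mathbf s^{\mathcal U}$, look for $\mathbf d\in\{0,1\}^l$ with $G_0^{\mathcal U}\mathbf d=\mathbf b^{\mathcal U}$; $E=1$ if such $\mathbf d$ exists and $E=0$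 (encoding failure) otherwise. (For the binary defect channel alone, the total redundancy is $l=n-k$.) *)

From HB Require Import structures.
From mathcomp Require Import all_boot all_order all_algebra.
Set Implicit Arguments. Unset Strict Implicit. Unset Printing Implicit Defensive.
Import Order.TTheory GRing.Theory Num.Theory.
Local Open Scope ring_scope.

Definition wt n (x : 'cV['F_2]_n) : nat := #|[set i | x i 0 != 0]|.

Definition C0perp n l (G0 : 'M['F_2]_(n, l)) : {set 'cV['F_2]_n} :=
  [set x | G0^T *m x == 0].

Definition B0 n l (G0 : 'M['F_2]_(n, l)) (w : nat) : nat :=
  #|[set x in C0perp G0 | wt x == w]|.

(* d_0: minimum weight of a nonzero vector of C_0^perp
   (convention: n.+1 if C_0^perp = {0}, making the hypothesis vacuous). *)
Definition d0 n l (G0 : 'M['F_2]_(n, l)) : nat :=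
  \big[minn/n.+1]_(x in C0perp G0 | x != 0) wt x.

(* A defect pattern: for each cell, None = not defective,
   Some b = defective and stuck at b. *)
Definition defect n := {ffun 'I_n -> option bool}.

Definition stuck_val (b : bool) : 'F_2 := if b then 1 else 0.

(* Probability of a defect pattern: each cell independently defective with
   probability beta, stuck at 0 / 1 with probability 1/2 each. *)
Definition defect_prob (R : realFieldType) (beta : R) n (u : defect n) : R :=
  \prod_(i < n) (if u i is Some _ then beta / 2 else 1 - beta).

(* E = 1: there is d with G_0^U d = (G_1 m)^U + s^U. *)
Definition encodable n l k (G0 : 'M['F_2]_(n, l)) (G1 : 'M['F_2]_(n, k))
  (m : 'cV['F_2]_k) (u : defect n) : bool :=
  [exists d : 'cV['F_2]_l, [forall i : 'I_n,
     if u i is Some s then (G0 *m d) i 0 == (G1 *m m) i 0 + stuck_val s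
     else true]].

Definition P_fail (R : realFieldType) (beta : R) n l k (G0 : 'M['F_2]_(n, l))
  (G1 : 'M['F_2]_(n, k)) (m : 'cV['F_2]_k) : R :=
  \sum_(u : defect n | ~~ encodable G0 G1 m u) defect_prob beta u.

From HB Require Import structures.
From mathcomp Require Import all_boot all_order all_algebra.
From mathcomp Require Import zify.
Import Order.TTheory GRing.Theory Num.Theory.
Set Implicit Arguments. Unset Strict Implicit. Unset Printing Implicit Defensive.
Local Open Scope ring_scope.

(* Encoding can only fail when the rows of G_0 indexed by the defects are
   linearly dependent, i.e. when some nonzero x in C_0^perp is supported inside
   the defect set; for a fixed x this happens with probability beta^(wt x).
   A union bound over C_0^perp \ {0}, grouped by weight, together with the
   binomial weight distribution gives
   P(E = 0) <= sum_w B_{0,w} beta^w <= 2^-l sum_w C(n,w) beta^w = 2^-l (1+beta)^n. *)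

Section SolveOnRows.
Variables (F : fieldType) (n l : nat) (A : 'M[F]_(n, l)) (U : pred 'I_n).
Hypothesis no_dual_vector_on_U :
  forall x : 'cV[F]_n, A^T *m x = 0 -> (forall i, x i 0 != 0 -> U i) -> x = 0.

(* [D *m A] is [A] with the rows outside [U] zeroed out. *)
Let D : 'M[F]_n := diag_mx (\row_i (U i)%:R).

Lemma kermx_restrict_sub : (kermx (D *m A) <= kermx D)%MS.
Proof.
apply/sub_kermxP/row_matrixP => i; rewrite row_mul row0.
apply: trmx_inj; rewrite trmx0; apply: no_dual_vector_on_U.
  by rewrite -trmx_mul -mulmxA -row_mul mulmx_ker row0 trmx0.
by move=> j; rewrite [_^T _ _]mxE mul_mx_diag !mxE; case: (U j); rewrite ?mulr0 ?eqxx.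
Qed.

Lemma rank_restrict_le : (\rank D <= \rank (D *m A))%N.
Proof.
have := mxrankS kermx_restrict_sub; rewrite !mxrank_ker.
have := rank_leq_row D; have := rank_leq_row (D *m A); lia.
Qed.

Lemma restrict_solvable (b : 'cV[F]_n) :
  exists d : 'cV[F]_l, forall i, U i -> (A *m d) i 0 = b i 0.
Proof.
have sAD : (A^T *m D <= D)%MS by apply: submxMl.
have sDA : (D <= A^T *m D)%MS.
  by rewrite -(geq_leqif (mxrank_leqif_sup sAD)) -[\rank (_ *m _)]mxrank_tr trmx_mul trmxK
    tr_diag_mx rank_restrict_le.
have /submxP[d Ed] : (b^T *m D <= A^T *m D)%MS by apply: submx_trans (submxMl _ _) sDA.
exists d^T => i Ui; have := congr1 (fun M : 'rV[F]_n => M 0 i) Ed.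
rewrite mulmxA /D !mul_mx_diag !mxE Ui !mulr1 => ->.
by apply: eq_bigr => j _; rewrite !mxE mulrC.
Qed.

End SolveOnRows.

Definition supp n (x : 'cV['F_2]_n) : {set 'I_n} := [set i | x i 0 != 0].

Definition defects n (u : defect n) : {set 'I_n} := [set i | u i != None].

Lemma encodable_of_no_codeword_in_defects n l k (G0 : 'M['F_2]_(n, l))
    (G1 : 'M['F_2]_(n, k)) (m : 'cV['F_2]_k) (u : defect n) :
  (forall x, x \in C0perp G0 -> supp x \subset defects u -> x = 0) ->
  encodable G0 G1 m u.
Proof.
move=> no_codeword.
pose b := \col_i (if u i is Some s then (G1 *m m) i 0 + stuck_val s else 0).
have [|d Hd] := restrict_solvable (A := G0) (U := fun i => u i != None) _ b.
  move=> x /eqP G0x sx; apply: no_codeword; first by rewrite inE G0x.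
  by apply/subsetP => i; rewrite !inE; apply: sx.
apply/existsP; exists d; apply/forallP => i; case Eu: (u i) => [s|] //.
by rewrite Hd ?Eu // mxE Eu.
Qed.

Lemma big_option_bool (R : nmodType) (f : option bool -> R) :
  \sum_(j : option bool) f j = f None + (f (Some true) + f (Some false)).
Proof.
rewrite (bigD1 None) //= (bigD1 (Some true)) //= (bigD1 (Some false)) //=.
by rewrite big_pred0 ?addr0 // => -[[]|].
Qed.

Lemma defect_prob_cover (R : realFieldType) (beta : R) n (S : {set 'I_n}) :
  \sum_(u : defect n | S \subset defects u) defect_prob beta u = beta ^+ #|S|.
Proof.
(* [g] folds the indicator of [S \subset defects u] into the per-cell factors,
   so that the sum factorises over the cells. *)
pose g i (j : option bool) : R :=
  if (i \in S) && (j == None) then 0 else if j is Some _ then beta / 2 else 1 - beta.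
have covered_prod u :
    (if S \subset defects u then defect_prob beta u else 0) = \prod_i g i (u i).
  case: (boolP (S \subset defects u)) => [/subsetP sS | /subsetPn[i Si]].
    apply: eq_bigr => i _; rewrite /g.
    by case: (boolP (i \in S)) => // /sS; rewrite inE; case: (u i).
  by rewrite inE negbK => ui0; rewrite (bigD1 i) //= /g Si ui0 mul0r.
rewrite big_mkcond /= (eq_bigr _ (fun u _ => covered_prod u)).
rewrite -(bigA_distr_bigA g) (eq_bigr (fun i => if i \in S then beta else 1)).
  by rewrite -big_mkcond prodr_const.
by move=> i _; rewrite big_option_bool /g; case: (i \in S); rewrite -splitr ?add0r ?subrK.
Qed.

Lemma ler_sum_exists (R : numDomainType) (I J : finType) (P : pred I)
    (Q : I -> pred J) (F : J -> R) :
  (forall j, 0 <= F j) ->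
  \sum_(j | [exists (i | P i), Q i j]) F j <= \sum_(i | P i) \sum_(j | Q i j) F j.
Proof.
move=> F_ge0; have if_ge0 (b : bool) j : 0 <= (if b then F j else 0) by case: b.
rewrite big_mkcond /=.
under [X in _ <= X]eq_bigr => i _ do rewrite big_mkcond /=.
rewrite exchange_big /=; apply: ler_sum => j _.
case: existsP => [[i /andP[Pi Qij]] | _]; last by rewrite sumr_ge0.
by rewrite (bigD1 i) //= Qij lerDl sumr_ge0.
Qed.

Lemma sum_expr_wt (R : pzSemiRingType) (beta : R) n (A : {set 'cV['F_2]_n}) :
  \sum_(x in A) beta ^+ wt x = \sum_(w < n.+1) beta ^+ w *+ #|[set x in A | wt x == w]|.
Proof.
have wt_lt (x : 'cV['F_2]_n) : (wt x < n.+1)%N.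
  by rewrite ltnS; apply: leq_trans (max_card _) _; rewrite card_ord.
rewrite (partition_big (fun x => Ordinal (wt_lt x)) xpredT) //=.
apply: eq_bigr => w _; rewrite -sumr_const; apply: eq_big => x.
  by rewrite !inE -val_eqE.
by move=> /andP[_ /eqP <-].
Qed.

Lemma P_fail_le_codewords (R : realFieldType) (beta : R) n l k
    (G0 : 'M['F_2]_(n, l)) (G1 : 'M['F_2]_(n, k)) (m : 'cV['F_2]_k) :
  0 <= beta <= 1 ->
  P_fail beta G0 G1 m <= \sum_(x in C0perp G0 :\ 0) beta ^+ wt x.
Proof.
move=> /andP[beta_ge0 beta_le1].
have prob_ge0 (u : defect n) : 0 <= defect_prob beta u.
  apply: prodr_ge0 => i _; case: (u i) => [_|]; last by rewrite subr_ge0.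
  by rewrite divr_ge0 ?ler0n.
apply: (@le_trans _ _ (\sum_(u | [exists (x | x \in C0perp G0 :\ 0), supp x \subset defects u])
                        defect_prob beta u)).
  rewrite [leLHS]big_mkcond [leRHS]big_mkcond /=; apply: ler_sum => u _.
  case: ifPn => [enc_fail | _]; last by case: ifP.
  rewrite ifT //; apply: contraNT enc_fail => no_codeword.
  apply: encodable_of_no_codeword_in_defects => x Cx sx; apply/eqP.
  apply: contraNT no_codeword => x_nz; apply/existsP; exists x.
  by rewrite in_setD1 x_nz Cx sx.
apply: le_trans (ler_sum_exists _ _ prob_ge0) _.
by apply: ler_sum => x _; rewrite defect_prob_cover.
Qed.

Lemma d0_le_wt n l (G0 : 'M['F_2]_(n, l)) (x : 'cV['F_2]_n) :
  x \in C0perp G0 :\ 0 -> (d0 G0 <= wt x)%N.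
Proof.
rewrite in_setD1 andbC => Px; rewrite /d0 -minEnat.
by have := bigmin_le_cond (P := fun y => (y \in C0perp G0) && (y != 0)) n.+1 (@wt n) Px.
Qed.

Lemma card_codewords_wt_le (R : numFieldType) n l (G0 : 'M['F_2]_(n, l)) (w : nat) :
  (forall w, (d0 G0 <= w <= n)%N -> (B0 G0 w)%:R <= (2 ^+ l)^-1 * ('C(n, w))%:R :> R) ->
  (w <= n)%N ->
  #|[set x in C0perp G0 :\ 0 | wt x == w]|%:R <= (2 ^+ l)^-1 * ('C(n, w))%:R :> R.
Proof.
move=> B0_le w_le_n; case: (ltnP w (d0 G0)) => [w_lt_d0 | d0_le_w].
  rewrite (_ : #|_| = 0)%N ?mulr_ge0 ?invr_ge0 ?exprn_ge0 ?ler0n //.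
  apply: eq_card0 => x; rewrite in_set; apply/andP => -[/d0_le_wt d0_le_wt_x /eqP wt_x].
  by move: d0_le_wt_x; rewrite wt_x leqNgt w_lt_d0.
apply: (le_trans _ (B0_le w _)); last by rewrite d0_le_w.
rewrite ler_nat /B0; apply/subset_leq_card/subsetP => x.
by rewrite !inE => /andP[/andP[_ ->] ->].
Qed.
Theorem corollary2 (R : realFieldType) (n l k : nat)
  (G0 : 'M['F_2]_(n, l)) (G1 : 'M['F_2]_(n, k)) (m : 'cV['F_2]_k) (beta : R) :
  0 < beta -> beta < 1 ->
  (forall w : nat, (d0 G0 <= w <= n)%N ->
     (B0 G0 w)%:R <= (2 ^+ l)^-1 * ('C(n, w))%:R :> R) ->
  P_fail beta G0 G1 m <= (2 ^+ l)^-1 * (1 + beta) ^+ n.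
Proof.
move=> beta_gt0 beta_lt1 B0_le.
have beta01 : 0 <= beta <= 1 by rewrite !ltW.
apply: le_trans (P_fail_le_codewords G0 G1 m beta01) _.
rewrite sum_expr_wt [1 + beta]addrC (exprD1n beta n) mulr_sumr; apply: ler_sum => w _.
rewrite -[_ *+ #|_|]mulr_natr -[_ *+ 'C(_, _)]mulr_natr mulrCA.
apply: ler_wpM2l; first by rewrite exprn_ge0 ?ltW.
by apply: card_codewords_wt_le; rewrite // -ltnS.
Qed.
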